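(* Let $\mathcal{C}$ be a unimodular simplicial complex on ground set $[n]$. Then for every face $S$ of $\mathcal{C}$, the link $\operatorname{link}_S(\mathcal{C})$ is unimodular.
   Context: A simplicial complex on $[n]$ is a family of subsets of $[n]$ closed under subsets; facets are inclusion-maximal faces. For a face $S$, $\operatorname{link}_S(\mathcal{C})=\{F\setminus S: F\in\mathcal{C}, S\subseteq F\}$, a complex on ground set $[n]\setminus S$. $\mathcal{A}_{\mathcal{C}}$ is the $0/1$ matrix with columns indexed by $\mathbf{i}\in\{1,2\}^n$ and rows indexed by pairs $(F,\mathbf{e})$, $F$ a facet, $\mathbf{e}\in\{1,2\}^F$; entry $1$ iff $\mathbf{e}=\mathbf{i}|_F$. An integer matrix is unimodular if every circuit (nonzero integer kernel vector with coprime entries and inclusion-minimal support) has entries in $\{0,\pm1\}$; $\mathcal{C}$ is unimodular if $\mathcal{A}_{\mathcal{C}}$ is. *)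

From mathcomp Require Import all_boot all_order all_algebra.
Set Implicit Arguments. Unset Strict Implicit. Unset Printing Implicit Defensive.
Import GRing.Theory Num.Theory.
Local Open Scope ring_scope.

Definition simplicial_complex (V : finType) (C : {set {set V}}) : Prop :=
  forall F G : {set V}, F \in C -> G \subset F -> G \in C.

Definition facet (V : finType) (C : {set {set V}}) (F : {set V}) : bool :=
  (F \in C) && [forall G in C, (F \subset G) ==> (G == F)].

Definition link (V : finType) (C : {set {set V}}) (S : {set V})
  : {set {set {x : V | x \notin S}}} :=
  [set [set x : {x : V | x \notin S} | val x \in F] | F : {set V} in C & S \subset F].

(* Rows of A_C: pairs (F, e) with F a facet and e ∈ {1,2}^F; e is stored as
   a function V -> bool that is [false] outside F (bool encodes {1,2}). *)
Definition Arow (V : finType) (C : {set {set V}}) :=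
  {p : {set V} * {ffun V -> bool} |
     facet C p.1 && [forall v, (v \notin p.1) ==> ~~ p.2 v]}.

(* Columns: i ∈ {1,2}^V, encoded as {ffun V -> bool}.
   Entry is 1 iff e = i|_F. *)
Definition A_mat (V : finType) (C : {set {set V}})
  (r : Arow C) (i : {ffun V -> bool}) : int :=
  if [forall v in (val r).1, i v == (val r).2 v] then 1 else 0.

Definition in_kernel (R K : finType) (M : R -> K -> int) (x : K -> int) : Prop :=
  forall r, \sum_(k : K) M r k * x k = 0.

Definition supp (K : finType) (x : K -> int) : {set K} := [set k | x k != 0].

Definition circuit (R K : finType) (M : R -> K -> int) (x : K -> int) : Prop :=
  [/\ in_kernel M x,
      supp x != set0,
      (\big[gcdn/0%N]_(k : K) `|x k|%N = 1%N) &
      forall y : K -> int, in_kernel M y -> supp y != set0 ->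
        supp y \subset supp x -> supp y = supp x].

Definition unimodular_mx (R K : finType) (M : R -> K -> int) : Prop :=
  forall x : K -> int, circuit M x -> forall k, x k \in [:: 0; 1; -1].

Definition unimodular_complex (V : finType) (C : {set {set V}}) : Prop :=
  unimodular_mx (@A_mat V C).

From mathcomp Require Import all_boot all_order all_algebra.
From Stdlib Require Import Classical.
Set Implicit Arguments. Unset Strict Implicit. Unset Printing Implicit Defensive.
Import GRing.Theory Num.Theory.
Local Open Scope ring_scope.

(* Lift a circuit x of A_(link) to A_C by x'(i) := x(i restricted to V \ S) * s(i),
   where s(i) = (-1)^#{v in S | i v}: a facet containing S sees the link row of
   its trace, while for a facet F missing some s in S flipping i at s pairs off the
   columns of the row with opposite signs.  The support of x' contains a circuit c of
   A_C, whose entries are 0, 1, -1, and freezing the coordinates in S at a point of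
   supp c gives a kernel vector y of A_(link) with entries 0, 1, -1 and support inside
   supp x.  A circuit is proportional to every kernel vector supported in its support,
   so coprimality of the entries of x forces |x| = |y|. *)

Section Circuits.

Variables (R K : finType) (M : R -> K -> int).

Definition minimal_supp (y : K -> int) : Prop :=
  forall z : K -> int, in_kernel M z -> supp z != set0 ->
    supp z \subset supp y -> supp z = supp y.

Lemma circuit_of_minimal_supp (y : K -> int) :
  in_kernel M y -> supp y != set0 -> minimal_supp y ->
  exists2 c, circuit M c & supp c = supp y.
Proof.
move=> ker_y nz_y min_y; have [k0] := set0Pn _ nz_y; rewrite inE => yk0.
set g := \big[gcdn/0%N]_k `|y k|%N.
have g_dvd k : (g %| `|y k|)%N by exact: biggcdn_inf (dvdnn _).
have g_gt0 : (0 < g)%N.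
  rewrite lt0n; apply: contraNneq yk0 => g0.
  by have := g_dvd k0; rewrite g0 dvd0n absz_eq0.
have gz : g%:Z != 0 by rewrite eqz_nat -lt0n.
pose c k := (y k %/ g%:Z)%Z.
have yE k : y k = c k * g%:Z by rewrite divzK // dvdzE.
have supp_c : supp c = supp y.
  by apply/setP => k; rewrite !inE yE mulf_eq0 (negPf gz) orbF.
exists c => //; split; rewrite ?supp_c //.
- move=> r; have := ker_y r.
  under eq_bigr => k _ do rewrite yE mulrA.
  by rewrite -mulr_suml => /eqP; rewrite mulf_eq0 (negPf gz) orbF => /eqP.
- apply/eqP; rewrite -dvdn1 -(dvdn_pmul2r g_gt0) mul1n {2}/g.
  apply/dvdn_biggcdP => k _; rewrite yE abszM dvdn_mul //.
  exact: biggcdn_inf (dvdnn _).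
Qed.

Lemma circuit_sub_supp (y : K -> int) :
  in_kernel M y -> supp y != set0 -> exists2 c, circuit M c & supp c \subset supp y.
Proof.
have [m] := ubnP #|supp y|; elim: m y => // m IH y; rewrite ltnS => le_ym ker_y nz_y.
have [[z [ker_z nz_z sub_zy ne_zy]] | no_z] := classic (exists z, [/\ in_kernel M z,
  supp z != set0, supp z \subset supp y & supp z <> supp y]).
  have lt_zy : (#|supp z| < #|supp y|)%N.
    by rewrite proper_card // properEneq sub_zy andbT; apply/eqP.
  have [c circ_c sub_cz] := IH z (leq_trans lt_zy le_ym) ker_z nz_z.
  by exists c; last exact: subset_trans sub_cz sub_zy.
have min_y : minimal_supp y.
  by move=> z ker_z nz_z sub_zy; apply: NNPP => ne_zy; apply: no_z; exists z.
have [c circ_c supp_c] := circuit_of_minimal_supp ker_y nz_y min_y.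
by exists c; rewrite ?supp_c.
Qed.

Lemma circuit_proportional (x y : K -> int) :
  circuit M x -> in_kernel M y -> supp y \subset supp x ->
  forall k l, x k * y l = y k * x l.
Proof.
case=> ker_x _ _ min_x ker_y sub_yx k l.
have y0 l' : x l' = 0 -> y l' = 0.
  move=> xl'0; apply/eqP; move: (subsetP sub_yx l'); rewrite !inE xl'0 eqxx.
  by move/contraTT; apply.
have [xk0 | xk_nz] := eqVneq (x k) 0; first by rewrite xk0 (y0 k xk0) !mul0r.
pose w l' := x k * y l' - y k * x l'.
have ker_w : in_kernel M w.
  move=> r; under eq_bigr => l' _ do rewrite mulrBr mulrCA [_ * (y k * _)]mulrCA.
  by rewrite sumrB -!mulr_sumr ker_x ker_y !mulr0 subrr.
have sub_wx : supp w \subset supp x.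
  apply/subsetP => l'; rewrite !inE; apply: contraNN => /eqP xl'0.
  by rewrite /w xl'0 y0 // !mulr0 subrr.
have [w0 | nz_w] := eqVneq (supp w) set0.
  by apply/eqP; rewrite -subr_eq0; have := in_set0 l; rewrite -w0 inE => /negbFE.
have := min_x w ker_w nz_w sub_wx => /setP /(_ k).
by rewrite !inE xk_nz /w mulrC subrr eqxx.
Qed.

Lemma circuit_absz_eq (x y : K -> int) l :
  circuit M x -> in_kernel M y -> supp y \subset supp x -> `|y l|%N = 1%N ->
  forall k, `|x k|%N = `|y k|%N.
Proof.
move=> circ_x ker_y sub_yx yl1.
have absE k : `|x k|%N = (`|y k| * `|x l|)%N.
  have := congr1 absz (circuit_proportional circ_x ker_y sub_yx k l).
  by rewrite !abszM yl1 muln1.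
have xl1 : `|x l|%N = 1%N.
  case: circ_x => _ _ gcd1 _; apply/eqP; rewrite -dvdn1 -gcd1.
  by apply/dvdn_biggcdP => k _; rewrite (absE k) dvdn_mull.
by move=> k; rewrite absE xl1 muln1.
Qed.

End Circuits.

Lemma unit_entryE (a : int) : (a \in [:: 0; 1; -1]) = (`|a| <= 1)%N.
Proof. by case: a => [[|[|m]]|[|m]]. Qed.

Lemma A_mat_row_sum (V : finType) (C : {set {set V}}) (r : Arow C)
    (x : {ffun V -> bool} -> int) :
  \sum_i A_mat r i * x i =
  \sum_(i : {ffun V -> bool} | [forall v in (val r).1, i v == (val r).2 v]) x i.
Proof.
rewrite [RHS]big_mkcond; apply: eq_bigr => i _.
by rewrite /A_mat; case: ifP; rewrite ?mul1r ?mul0r.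
Qed.

Section Link.

Variables (V : finType) (S : {set V}).

Local Notation W := {x : V | x \notin S}.
Local Notation col := {ffun V -> bool}.
Local Notation link_col := {ffun W -> bool}.

Definition link_face (F : {set V}) : {set W} := [set w : W | val w \in F].

Definition join_face (G : {set W}) : {set V} := S :|: val @: G.

Definition col_restr (i : col) : link_col := [ffun w => i (val w)].

Definition col_glue (j : link_col) (b : col) : col :=
  [ffun v => if insub v is Some w then j w else b v].

Definition col_sign (i : col) : int := \prod_(v in S) (if i v then -1 else 1).

Definition col_lift (x : link_col -> int) (i : col) : int := x (col_restr i) * col_sign i.

Lemma col_glue_in (j : link_col) (b : col) v : v \in S -> col_glue j b v = b v.
Proof. by move=> Sv; rewrite ffunE insubN // negbK. Qed.

Lemma col_glue_val (j : link_col) (b : col) (w : W) : col_glue j b (val w) = j w.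
Proof. by rewrite ffunE valK. Qed.

Lemma col_restr_glue (j : link_col) (b : col) : col_restr (col_glue j b) = j.
Proof. by apply/ffunP => w; rewrite ffunE col_glue_val. Qed.

Lemma col_glue_restr (i b : col) : {in S, i =1 b} -> col_glue (col_restr i) b = i.
Proof.
move=> eq_ib; apply/ffunP => v; have [Sv | nSv] := boolP (v \in S).
  by rewrite col_glue_in // eq_ib.
by rewrite ffunE insubT ffunE.
Qed.

Lemma col_sign_neq0 (i : col) : col_sign i != 0.
Proof. by apply/prodf_neq0 => v _; case: (i v). Qed.

Lemma col_sign_glue (j : link_col) (b : col) : col_sign (col_glue j b) = col_sign b.
Proof. by apply: eq_bigr => v Sv; rewrite col_glue_in. Qed.

Lemma link_face_join (G : {set W}) : link_face (join_face G) = G.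
Proof.
apply/setP => w; rewrite !inE (negPf (valP w)) /=.
by rewrite (mem_imset _ _ val_inj).
Qed.

Lemma join_face_link (F : {set V}) : S \subset F -> join_face (link_face F) = F.
Proof.
move=> sSF; apply/setP => v; rewrite !inE; have [Sv | nSv] /= := boolP (v \in S).
  by rewrite (subsetP sSF).
by rewrite -[v]/(val (exist _ v nSv : W)) (mem_imset _ _ val_inj) inE.
Qed.

Lemma link_faceS (F1 F2 : {set V}) : F1 \subset F2 -> link_face F1 \subset link_face F2.
Proof. by move=> sF12; apply/subsetP => w; rewrite !inE => /(subsetP sF12). Qed.

Lemma join_faceS (G1 G2 : {set W}) : G1 \subset G2 -> join_face G1 \subset join_face G2.
Proof. by move=> sG12; rewrite setUS // imsetS. Qed.

Lemma sum_col_glue (F : {set V}) (e b : col) (g : col -> int) :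
  S \subset F -> {in S, e =1 b} ->
  \sum_(i : col | [forall v in F, i v == e v]) g i =
  \sum_(j : link_col | [forall w in link_face F, j w == col_restr e w]) g (col_glue j b).
Proof.
move=> sSF eq_eb; rewrite (reindex_onto (col_glue^~ b) col_restr); last first.
  move=> i /forallP agree_ie; apply: col_glue_restr => v Sv.
  by have /implyP/(_ (subsetP sSF v Sv))/eqP -> := agree_ie v; rewrite eq_eb.
apply: eq_bigl => j; rewrite col_restr_glue eqxx andbT.
apply/forallP/forallP => agree_je v.
  apply/implyP; rewrite inE => Fv.
  by have := agree_je (val v); rewrite Fv col_glue_val ffunE.
apply/implyP => Fv; have [Sv | nSv] := boolP (v \in S).
  by rewrite col_glue_in // eq_eb.
have := agree_je (exist _ v nSv); rewrite inE /= Fv /= ffunE /=.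
by rewrite ffunE insubT.
Qed.

Variable C : {set {set V}}.

Lemma mem_link (G : {set W}) :
  reflect (exists2 F, (F \in C) && (S \subset F) & G = link_face F) (G \in link C S).
Proof.
apply: (iffP imsetP) => [[F CF ->]|[F CF ->]]; exists F; rewrite ?inE //.
by move: CF; rewrite inE.
Qed.

Lemma facet_join_face (G : {set W}) : facet (link C S) G -> facet C (join_face G).
Proof.
case/andP => /mem_link[F0 /andP[CF0 sSF0] ->] /forallP maxF0.
rewrite join_face_link // /facet CF0; apply/forallP => F; apply/implyP => CF.
apply/implyP => sF0F; have sSF := subset_trans sSF0 sF0F.
have linkF : link_face F \in link C S by apply/mem_link; exists F; rewrite ?CF.
have := maxF0 (link_face F); rewrite linkF link_faceS //= => /eqP eqF.
by rewrite -(join_face_link sSF) eqF join_face_link.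
Qed.

Lemma facet_link_face (F : {set V}) :
  facet C F -> S \subset F -> facet (link C S) (link_face F).
Proof.
case/andP => CF /forallP maxF sSF.
have linkF : link_face F \in link C S by apply/mem_link; exists F; rewrite ?CF.
rewrite /facet linkF; apply/forallP => G.
apply/implyP => /mem_link[F1 /andP[CF1 sSF1] ->].
apply/implyP => sF1; have := maxF F1; rewrite CF1 /=.
by rewrite -(join_face_link sSF) -(join_face_link sSF1) join_faceS // => /eqP ->.
Qed.

Lemma in_kernel_slice (c : col -> int) (b : col) :
  in_kernel (@A_mat _ C) c -> in_kernel (@A_mat _ (link C S)) (fun j => c (col_glue j b)).
Proof.
move=> ker_c [[G e] row_Ge]; have /andP[/= facet_G /forallP e0] := row_Ge.
pose r := (join_face G, [ffun v => (v \in join_face G) && col_glue e b v] : col).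
have row_r : facet C r.1 && [forall v, (v \notin r.1) ==> ~~ r.2 v].
  rewrite facet_join_face //=; apply/forallP => v; apply/implyP => nGv.
  by rewrite ffunE (negPf nGv).
have sSG : S \subset join_face G by rewrite subsetUl.
have eq_r2b : {in S, r.2 =1 b}.
  by move=> v Sv; rewrite ffunE (subsetP sSG v Sv) col_glue_in.
have restr_r2 : col_restr r.2 = e.
  apply/ffunP => w; rewrite ffunE /r /= ffunE col_glue_val.
  have := link_face_join G => /setP /(_ w); rewrite inE => ->.
  by have := e0 w; case: (w \in G) => //= /negPf ->.
have := ker_c (exist _ r row_r).
by rewrite !A_mat_row_sum /= (sum_col_glue c sSG eq_r2b) link_face_join restr_r2.
Qed.

Lemma sum_col_lift_off (x : link_col -> int) (F : {set V}) (e : col) :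
  ~~ (S \subset F) -> \sum_(i : col | [forall v in F, i v == e v]) col_lift x i = 0.
Proof.
case/subsetPn => s Ss nFs.
pose flip (i : col) : col := [ffun v => if v == s then ~~ i v else i v].
have flipK : involutive flip.
  by move=> i; apply/ffunP => v; rewrite !ffunE; case: eqP => // _; rewrite negbK.
have flip_restr i : col_restr (flip i) = col_restr i.
  apply/ffunP => w; rewrite !ffunE; case: eqP => // ws.
  by move: (valP w); rewrite ws Ss.
have flip_sign i : col_sign (flip i) = - col_sign i.
  rewrite /col_sign (bigD1 s Ss) [in RHS](bigD1 s Ss) /= ffunE eqxx.
  rewrite (eq_bigr (fun v => if i v then -1 else 1)); last first.
    by move=> v /andP[_ /negPf nvs]; rewrite ffunE nvs.
  by case: (i s); rewrite ?mulN1r ?mul1r ?opprK.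
set t := \sum_(i | _) _.
have : t = - t.
  rewrite {1}/t (reindex_inj (inv_inj flipK)) -sumrN; apply: eq_big => i.
    apply: eq_forallb => v; have [Fv | //] /= := boolP (v \in F).
    have nvs : v != s by apply: contraNneq nFs => <-.
    by rewrite ffunE (negPf nvs).
  by move=> _; rewrite /col_lift flip_restr flip_sign mulrN.
by move/eqP; rewrite -subr_eq0 opprK -mulr2n mulrn_eq0 => /eqP.
Qed.

Lemma sum_col_lift_on (x : link_col -> int) (F : {set V}) (e : col) :
  S \subset F ->
  \sum_(i : col | [forall v in F, i v == e v]) col_lift x i =
  col_sign e * \sum_(j : link_col | [forall w in link_face F, j w == col_restr e w]) x j.
Proof.
move=> sSF; rewrite (sum_col_glue _ sSF (b := e)) // mulr_sumr.
by apply: eq_bigr => j _; rewrite /col_lift col_restr_glue col_sign_glue mulrC.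
Qed.

Lemma in_kernel_lift (x : link_col -> int) :
  in_kernel (@A_mat _ (link C S)) x -> in_kernel (@A_mat _ C) (col_lift x).
Proof.
move=> ker_x [[F e] row_Fe]; have /andP[/= facet_F /forallP e0] := row_Fe.
rewrite A_mat_row_sum /=.
have [sSF | nsSF] := boolP (S \subset F); last exact: sum_col_lift_off.
pose r := (link_face F, col_restr e).
have row_r : facet (link C S) r.1 && [forall w, (w \notin r.1) ==> ~~ r.2 w].
  rewrite facet_link_face //=; apply/forallP => w; apply/implyP; rewrite inE ffunE.
  exact: implyP (e0 (val w)).
have := ker_x (exist _ r row_r); rewrite A_mat_row_sum /= => sum_r0.
by rewrite sum_col_lift_on // sum_r0 mulr0.
Qed.

Lemma unimodular_link : unimodular_complex C -> unimodular_complex (link C S).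
Proof.
move=> uniC x circ_x k.
have [ker_x /set0Pn[j0 xj0] _ _] := circ_x; rewrite inE in xj0.
have [c circ_c sub_c] :
    exists2 c, circuit (@A_mat _ C) c & supp c \subset supp (col_lift x).
  apply: circuit_sub_supp; first exact: in_kernel_lift.
  apply/set0Pn; exists (col_glue j0 [ffun=> false]).
  by rewrite inE /col_lift col_restr_glue mulf_neq0 ?col_sign_neq0.
have [ker_c /set0Pn[i0 ci0] _ _] := circ_c; rewrite inE in ci0.
pose y j := c (col_glue j i0).
have sub_y : supp y \subset supp x.
  apply/subsetP => j; rewrite !inE => yj.
  have := subsetP sub_c (col_glue j i0); rewrite !inE /col_lift col_restr_glue.
  by move=> /(_ yj); rewrite mulf_eq0 negb_or => /andP[].
have y_restr : `|y (col_restr i0)|%N = 1%N.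
  rewrite /y col_glue_restr //; apply/eqP.
  by rewrite eqn_leq -unit_entryE uniC // lt0n absz_eq0.
have ker_y := in_kernel_slice i0 ker_c.
by rewrite unit_entryE (circuit_absz_eq circ_x ker_y sub_y y_restr) -unit_entryE uniC.
Qed.

End Link.

Theorem corollary3p10 (n : nat) (C : {set {set 'I_n}}) (S : {set 'I_n}) :
  simplicial_complex C -> unimodular_complex C -> S \in C ->
  unimodular_complex (link C S).
Proof. by move=> _ uniC _; exact: unimodular_link. Qed.
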